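(* Let $n,k$ be positive integers and $K=\min(\lfloor (n+k)/2\rfloor, n)$. Then \[ |\mathrm{Hom}^1(P_n,P_k)| = \sum_{l=\lceil (n-1)/2\rceil}^{K-1} |\mathcal L(l,\, n-1-l;\, 0,\, k-1)|. \]
   Context: For a positive integer $m$, $P_m$ denotes the path with vertex set $[m]=\{1,\dots,m\}$ in which $i$ and $j$ are adjacent iff $|i-j|=1$; $\mathrm{Hom}(P_n,P_k)$ is the set of maps $f:[n]\to[k]$ with $|f(i)-f(i+1)|=1$ for $1\le i\le n-1$, and $\mathrm{Hom}^1(P_n,P_k)=\{f\in\mathrm{Hom}(P_n,P_k): f(1)=1\}$. A lattice path from the origin to $(a,b)\in\mathbb N^2$ is a sequence of points of $\mathbb Z^2$ starting at $(0,0)$ and ending at $(a,b)$, each step being $(1,0)$ (east) or $(0,1)$ (north). For nonnegative integers $a,b,t,s$ with $a+t\ge b\ge a-s$, $\mathcal L(a,b;t,s)$ denotes the set of lattice paths from $(0,0)$ to $(a,b)$ all of whose points $(x,y)$ satisfy $x-s\le y\le x+t$. *)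

From mathcomp Require Import all_boot.
Set Implicit Arguments. Unset Strict Implicit. Unset Printing Implicit Defensive.

(* Vertex j+1 of P_m is represented by the ordinal j : 'I_m (0-based).
   |x - y| = 1 for naturals is (x == y.+1) || (y == x.+1). *)
Definition adjP (x y : nat) : bool := (x == y.+1) || (y == x.+1).

Definition Hom (n k : nat) : {set {ffun 'I_n -> 'I_k}} :=
  [set f : {ffun 'I_n -> 'I_k} |
     [forall i : 'I_n, forall j : 'I_n,
        (val j == (val i).+1) ==> adjP (f i) (f j)]].

(* Hom^1(P_n, P_k): those f with f(1) = 1, i.e. f maps vertex 0 to vertex 0
   (0-based).  For n = 0 there is no vertex 1; the condition is vacuous. *)
Definition Hom1 (n k : nat) : {set {ffun 'I_n -> 'I_k}} :=
  [set f in Hom n k | [forall i : 'I_n, (val i == 0) ==> (val (f i) == 0)]].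

(* A lattice path from (0,0) to (a,b) with E/N steps is encoded by its step
   sequence: an (a+b)-tuple of booleans (true = east (1,0), false = north (0,1))
   containing exactly a east steps. *)
Definition path_point (p : seq bool) (i : nat) : nat * nat :=
  (count id (take i p), i - count id (take i p)).

(* L(a,b;t,s): lattice paths from the origin to (a,b) all of whose points
   (x,y) satisfy x - s <= y <= x + t (stated over nat without subtraction). *)
Definition LP (a b t s : nat) : {set (a + b).-tuple bool} :=
  [set p : (a + b).-tuple bool |
     (count id p == a) &&
     [forall i : 'I_(a + b).+1,
        let xy := path_point p i in
        (xy.1 <= xy.2 + s) && (xy.2 <= xy.1 + t)]].

From mathcomp Require Import all_boot zify.
Set Implicit Arguments. Unset Strict Implicit. Unset Printing Implicit Defensive.

(* Write n = m.+1 and k = K.+1, and read a homomorphism f in Hom^1(P_n, P_k)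
   as a walk of m unit steps on {0, ..., K} starting at 0.  Recording an
   up-step as an east step (true) and a down-step as a north step (false)
   turns the walk into a lattice path with m steps whose point after i steps
   is (ups, downs) with  f(i) = ups - downs.  The constraint 0 <= f(i) <= K
   says exactly that every point (x, y) of the path satisfies
   y <= x <= y + K, i.e. the path stays "in the band" defining L(_, _; 0, K).
   So the step sequence is a bijection from Hom^1(P_n, P_k) onto the
   in-band boolean m-tuples ([card_Hom1]).  Splitting these tuples by their
   number l of east steps gives the sets L(l, m - l; 0, K) ([card_band_split],
   [LP_band]); the endpoint (l, m - l) must itself lie in the band, which
   forces uphalf m <= l <= m and 2 l <= m + K ([band_count_bounds]), so only
   the terms of the stated range are nonzero. *)

Definition ups (s : seq bool) (i : nat) : nat := count id (take i s).

Lemma ups_le (s : seq bool) (i : nat) : ups s i <= i.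
Proof.
apply: leq_trans (count_size _ _) _; rewrite size_take; case: ifP => // /negbT; lia.
Qed.

Lemma upsS (s : seq bool) (i : nat) :
  i < size s -> ups s i.+1 = ups s i + nth false s i.
Proof. by move=> lt_is; rewrite /ups (take_nth false lt_is) -cats1 count_cat /= addn0. Qed.

Definition in_band (K : nat) (s : seq bool) : bool :=
  all (fun i => let xy := path_point s i in (xy.2 <= xy.1) && (xy.1 <= xy.2 + K))
      (iota 0 (size s).+1).

Lemma in_bandP (K : nat) (s : seq bool) :
  reflect (forall i, i <= size s -> i - ups s i <= ups s i <= i - ups s i + K)
          (in_band K s).
Proof.
apply: (iffP allP) => [band i le_is | band i].
- by apply: band; rewrite mem_iota add0n ltnS.
- by rewrite mem_iota add0n ltnS; apply: band.
Qed.

Lemma LP_band (a b K : nat) :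
  LP a b 0 K = [set p : (a + b).-tuple bool | (count id p == a) && in_band K p].
Proof.
apply/setP => p; rewrite !inE; congr (_ && _).
apply/forallP/allP => [band i | band i].
- rewrite mem_iota size_tuple add0n => lt_i.
  by have := band (Ordinal lt_i); rewrite /= addn0 andbC.
- have := band i; rewrite mem_iota size_tuple add0n ltn_ord /= addn0 andbC.
  exact.
Qed.

Lemma band_endpoint (K m : nat) (t : m.-tuple bool) :
  in_band K t -> m - count id t <= count id t <= m - count id t + K.
Proof.
move=> /in_bandP /(_ _ (leqnn _)).
by rewrite /ups take_size size_tuple.
Qed.

Lemma band_count_bounds (K m : nat) (t : m.-tuple bool) :
  in_band K t ->
  uphalf m <= count id t < minn ((m.+1 + K.+1)./2) m.+1.
Proof.
move=> /band_endpoint /andP [lo hi].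
have le_lm : count id t <= m by rewrite -{2}(size_tuple t) count_size.
have [e1 e2] := (odd_double_half m, odd_double_half (m.+1 + K.+1)).
rewrite uphalf_half leq_min ltnS le_lm andbT; apply/andP; split; lia.
Qed.

Lemma card_band_split (K m : nat) :
  #|[set t : m.-tuple bool | in_band K t]| =
  \sum_(0 <= l < m.+1) #|[set t : m.-tuple bool | (count id t == l) && in_band K t]|.
Proof.
rewrite big_mkord -sum1_card.
rewrite (partition_big (fun t : m.-tuple bool => inord (count id t) : 'I_m.+1) predT) //=.
apply: eq_bigr => l _; rewrite -sum1_card; apply: eq_bigl => t; rewrite !inE andbC.
have lt_cm : count id t < m.+1 by rewrite ltnS -{2}(size_tuple t) count_size.
congr (_ && _); apply/eqP/eqP => [<- | e]; first by rewrite inordK.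
by apply: val_inj; rewrite /= inordK.
Qed.

Section WalksAsPaths.
Variables m K : nat.

Definition walk_val (f : {ffun 'I_m.+1 -> 'I_K.+1}) (i : nat) : nat := val (f (inord i)).

Lemma Hom1P (f : {ffun 'I_m.+1 -> 'I_K.+1}) :
  f \in Hom1 m.+1 K.+1 <->
  (forall i, i < m -> adjP (walk_val f i) (walk_val f i.+1)) /\ walk_val f 0 = 0.
Proof.
rewrite !inE; split => [/andP [/forallP hom /forallP start] | [hom start]].
- split => [i lt_im | ].
  + have /forallP /(_ (inord i.+1)) /implyP := hom (inord i); apply.
    by rewrite /= !inordK //; lia.
  + by have /implyP := start (inord 0); rewrite /= inordK // => /(_ isT) /eqP.
- apply/andP; split; apply/forallP => i.
  + apply/forallP => j; apply/implyP => /eqP ej.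
    have lt_im : i < m by have := ltn_ord j; rewrite ej.
    have := hom i lt_im; rewrite /walk_val inord_val.
    by have -> : inord i.+1 = j by apply: val_inj; rewrite /= ej inordK.
  + apply/implyP => /eqP i0; move: start; rewrite /walk_val.
    have -> : inord 0 = i by apply: val_inj; rewrite /= i0 inordK.
    by move=> ->.
Qed.

Definition steps (f : {ffun 'I_m.+1 -> 'I_K.+1}) : seq bool :=
  mkseq (fun i => walk_val f i.+1 == (walk_val f i).+1) m.

Lemma size_steps (f : {ffun 'I_m.+1 -> 'I_K.+1}) : size (steps f) == m.
Proof. by rewrite size_mkseq. Qed.

Definition steps_tuple (f : {ffun 'I_m.+1 -> 'I_K.+1}) : m.-tuple bool :=
  Tuple (size_steps f).

Lemma walk_height (f : {ffun 'I_m.+1 -> 'I_K.+1}) :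
  f \in Hom1 m.+1 K.+1 -> forall i, i <= m ->
  ups (steps f) i = walk_val f i + (i - ups (steps f) i).
Proof.
move=> /Hom1P [hom start]; elim=> [|i IH] lt_im; first by rewrite /ups take0 start.
have lt_is : i < size (steps f) by rewrite size_mkseq.
rewrite upsS // nth_mkseq //.
have := IH (ltnW lt_im); have := hom i lt_im; have := ups_le (steps f) i.
rewrite /adjP; case: (boolP (walk_val f i.+1 == (walk_val f i).+1)) => [/eqP|_] /=.
- by move=> ? _; lia.
- by move=> ? /eqP; lia.
Qed.

Lemma steps_in_band (f : {ffun 'I_m.+1 -> 'I_K.+1}) :
  f \in Hom1 m.+1 K.+1 -> in_band K (steps f).
Proof.
move=> hf; apply/in_bandP => i; rewrite size_mkseq => le_im.
have := walk_height hf le_im; have : walk_val f i < K.+1 by exact: ltn_ord.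
move=> ? ?; apply/andP; split; lia.
Qed.

(* A walk is determined by its step sequence, since it starts at 0. *)
Lemma steps_inj : {in Hom1 m.+1 K.+1 &, injective steps}.
Proof.
move=> f1 f2 hf1 hf2 e; apply/ffunP => j; apply: val_inj.
have le_jm : j <= m by rewrite -ltnS ltn_ord.
have := walk_height hf1 le_jm; have := walk_height hf2 le_jm.
rewrite e /walk_val inord_val => e2 e1.
by apply: (@addIn (j - ups (steps f2) j)); rewrite -e1 -e2.
Qed.

Definition height (s : seq bool) (i : nat) : nat := ups s i - (i - ups s i).

Definition walk_of (s : seq bool) : {ffun 'I_m.+1 -> 'I_K.+1} :=
  [ffun j : 'I_m.+1 => inord (height s j)].

Lemma walk_of_val (s : seq bool) (i : nat) :
  size s = m -> in_band K s -> i <= m -> walk_val (walk_of s) i = height s i.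
Proof.
move=> size_s /in_bandP; rewrite size_s => band le_im.
rewrite /walk_val ffunE /=.
have -> : (inord i : 'I_m.+1) = i :> nat by rewrite inordK.
have /andP [lo hi] := band i le_im.
by rewrite inordK // /height; lia.
Qed.

Lemma height_step (s : seq bool) (i : nat) :
  in_band K s -> i < size s ->
  if nth false s i then height s i.+1 = (height s i).+1
  else height s i = (height s i.+1).+1.
Proof.
move=> /in_bandP band lt_is; have /andP [lo _] := band i (ltnW lt_is).
have /andP [lo' _] := band i.+1 lt_is.
move: lo'; have := ups_le s i; rewrite /height upsS //.
by case: (nth false s i) => /=; lia.
Qed.

Lemma walk_of_Hom1 (s : seq bool) :
  size s = m -> in_band K s -> walk_of s \in Hom1 m.+1 K.+1.
Proof.
move=> size_s band; apply/Hom1P; split; last first.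
  by rewrite walk_of_val // /height /ups take0.
move=> i lt_im; rewrite !walk_of_val //; last exact: ltnW.
have := height_step band (i := i); rewrite size_s /adjP => /(_ lt_im).
by case: (nth false s i) => ->; rewrite eqxx ?orbT.
Qed.

Lemma steps_walk_of (s : seq bool) :
  size s = m -> in_band K s -> steps (walk_of s) = s.
Proof.
move=> size_s band; apply: (@eq_from_nth _ false); first by rewrite size_mkseq.
rewrite size_mkseq => i lt_im; rewrite nth_mkseq // !walk_of_val //; last exact: ltnW.
have := height_step band (i := i); rewrite size_s => /(_ lt_im).
by case: (nth false s i) => ->; rewrite ?eqxx ?ltn_eqF.
Qed.

End WalksAsPaths.

Lemma card_Hom1 (m K : nat) :
  #|Hom1 m.+1 K.+1| = #|[set t : m.-tuple bool | in_band K t]|.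
Proof.
have inj : {in Hom1 m.+1 K.+1 &, injective (@steps_tuple m K)}.
  by move=> f1 f2 hf1 hf2 /(congr1 val); exact: steps_inj.
rewrite -(card_in_imset inj); apply: eq_card => t; rewrite inE.
apply/imsetP/idP => [[f hf ->] | band]; first exact: steps_in_band.
exists (walk_of m K t); first exact: walk_of_Hom1 (size_tuple t) band.
by apply: val_inj; rewrite /= steps_walk_of // size_tuple.
Qed.

(* Tuples of length l + (m - l) and of length m are the same when l <= m. *)
Lemma card_tuple_cast (N M : nat) (P : pred (seq bool)) : N = M ->
  #|[set t : N.-tuple bool | P t]| = #|[set t : M.-tuple bool | P t]|.
Proof. by move->. Qed.

Theorem mainTheorem3 (n k : nat) (hn : 0 < n) (hk : 0 < k) :
  #|Hom1 n k| =
  \sum_(uphalf (n - 1) <= l < minn ((n + k)./2) n) #|LP l (n - 1 - l) 0 (k - 1)|.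
Proof.
case: n hn => // m _; case: k hk => // K _; rewrite !subn1 /=.
set lo := uphalf m; set hi := minn _ _.
set G := fun l => #|[set t : m.-tuple bool | (count id t == l) && in_band K t]|.
have LP_G l : l < hi -> #|LP l (m - l) 0 K| = G l.
  move=> lt_lh; rewrite LP_band.
  apply: (@card_tuple_cast _ _ (fun s => (count id s == l) && in_band K s)).
  by move: lt_lh; rewrite leq_min ltnS => /andP [_ ?]; rewrite subnKC.
have G_out l : ~~ (lo <= l < hi) -> G l = 0.
  move=> out; apply/eqP; rewrite cards_eq0; apply/eqP/setP => t; rewrite !inE.
  by apply: contraNF out => /andP [/eqP <- /band_count_bounds].
have le_lo_hi : lo <= hi by rewrite /lo /hi uphalf_half leq_min; apply/andP; split; lia.
rewrite card_Hom1 card_band_split.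
rewrite (@eq_big_nat _ _ _ lo hi _ G); last by move=> l /andP [_ /LP_G].
rewrite [RHS](big_nat_widenl _ 0) // [RHS](big_nat_widen 0 hi m.+1) ?geq_minr //.
by rewrite [RHS]big_rmcond // => l /G_out.
Qed.
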